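(* Let $x_1,\dots,x_N$ be training data points, let $f(x,\theta)$ be a loss function differentiable in the parameter $\theta$, and fix the current parameter $\theta_t$. Let $S_b \subseteq \{x_1,\dots,x_N\}$ be a random bucket (the set of data points sharing the query's hash value in the hash table probed), and, conditionally on $S_b$, let $x_m$ be an element chosen uniformly at random from $S_b$. For each $i$, let $p_i>0$ denote the probability that $x_i$ belongs to $S_b$. Define $$\mathrm{Est} = \frac{1}{N}\sum_{i=1}^N \mathbb{1}_{x_i\in S_b}\,\mathbb{1}_{(x_i = x_m \mid x_i\in S_b)}\,\frac{\nabla f(x_i,\theta_t)\cdot |S_b|}{p_i}.$$ Then $\mathrm{Est}$ is an unbiased estimator of the full gradient: $$\mathbb{E}[\mathrm{Est}] = \frac{1}{N}\sum_{i=1}^N \nabla f(x_i,\theta_t).$$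
   Context: This is the LSH-sampled gradient estimator (LGD). Data points are preprocessed into locality-sensitive hash tables; at iteration $t$ the query (built from $\theta_t$) is hashed, a hash table is probed, and the matching non-empty bucket is $S_b$. The paper writes the bucket-membership probability as $p_i = cp(x_i,\theta_t)^K\,(1-cp(x_i,\theta_t)^K)^{l-1}$, where $cp(x,\theta)=\Pr(h(x)=h(\theta))$ is the collision probability of the LSH function $h$, $K$ is the number of concatenated hash functions per table, and $l$ is the number of tables probed until a non-empty bucket was found; in the statement $p_i$ simply denotes $\Pr(x_i\in S_b)$. $\mathbb{1}_{(x_i = x_m\mid x_i\in S_b)}$ is the indicator that $x_i$ is the element selected from the bucket. *)

From HB Require Import structures.
From mathcomp Require Import all_boot all_order all_algebra.
From mathcomp Require Import all_classical all_reals all_analysis.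
Set Implicit Arguments. Unset Strict Implicit. Unset Printing Implicit Defensive.
Import Order.TTheory GRing.Theory Num.Theory.
Import numFieldNormedType.Exports.
Local Open Scope ring_scope.

Definition grad (R : realType) (d : nat) (g : 'rV[R]_d -> R) (theta : 'rV[R]_d)
  : 'rV[R]_d :=
  \row_(j < d) derive g theta (delta_mx 0 j).

(* Distribution of the bucket: PS S = Pr(S_b = S), S a subset of the indices.
   Inclusion probability p_i = Pr(x_i \in S_b). *)
Definition incl_prob (R : realType) (N : nat) (PS : {set 'I_N} -> R) (i : 'I_N) : R :=
  \sum_(S : {set 'I_N} | i \in S) PS S.

Definition joint (R : realType) (N : nat) (PS : {set 'I_N} -> R)
  (S : {set 'I_N}) (m : 'I_N) : R :=
  PS S * (if m \in S then (#|S|%:R)^-1 else 0).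

Definition Est (R : realType) (N d : nat) (gr : 'I_N -> 'rV[R]_d)
  (PS : {set 'I_N} -> R) (S : {set 'I_N}) (m : 'I_N) : 'rV[R]_d :=
  (N%:R)^-1 *: \sum_(i < N)
     (((i \in S)%:R * (i == m)%:R * #|S|%:R / incl_prob PS i) *: gr i).

Definition expect (R : realType) (N d : nat) (PS : {set 'I_N} -> R)
  (X : {set 'I_N} -> 'I_N -> 'rV[R]_d) : 'rV[R]_d :=
  \sum_(S : {set 'I_N}) \sum_(m < N) joint PS S m *: X S m.

From HB Require Import structures.
From mathcomp Require Import all_boot all_order all_algebra.
From mathcomp Require Import all_classical all_reals all_analysis.
From mathcomp Require Import ring.
Import Order.TTheory GRing.Theory Num.Theory.
Import numFieldNormedType.Exports.
Local Open Scope ring_scope.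

(* Unbiasedness is a finite-sum identity.  Expanding the expectation, the
   term of [x_i] survives only when [m = i], and drawing [m] uniformly from
   [S_b] contributes the factor [1 / |S_b|] that cancels the [|S_b|] in the
   estimator.  What remains is [Pr(x_i \in S_b) / p_i = 1], so the expected
   weight of every gradient is [1/N].  Nothing about the loss or about the
   law of the bucket beyond [p_i <> 0] is used. *)

Section LGDUnbiased.

Variables (R : realType) (N : nat) (PS : {set 'I_N} -> R).

Definition Est_weight (S : {set 'I_N}) (m i : 'I_N) : R :=
  (i \in S)%:R * (i == m)%:R * #|S|%:R / incl_prob PS i.

Lemma incl_probE (i : 'I_N) :
  incl_prob PS i = \sum_(S : {set 'I_N}) (i \in S)%:R * PS S.
Proof.
rewrite /incl_prob big_mkcond /=; apply: eq_bigr => S _.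
by case: (i \in S); rewrite ?mul1r ?mul0r.
Qed.

Lemma joint_mul_card (S : {set 'I_N}) (i : 'I_N) :
  joint PS S i * #|S|%:R = (i \in S)%:R * PS S.
Proof.
rewrite /joint; have [iS|_] /= := boolP (i \in S); last by rewrite mulr0 !mul0r.
have cardS_neq0 : (#|S|%:R : R) != 0.
  by rewrite pnatr_eq0 -lt0n; apply/card_gt0P; exists i.
by rewrite mul1r -mulrA mulVf // mulr1.
Qed.

Lemma sum_joint_Est_weight (S : {set 'I_N}) (i : 'I_N) :
  \sum_(m < N) joint PS S m * Est_weight S m i
  = (i \in S)%:R * PS S / incl_prob PS i.
Proof.
rewrite (bigD1 i) //= big1 ?addr0 => [|m]; last first.
  by rewrite eq_sym /Est_weight => /negbTE ->; rewrite mulr0 !mul0r mulr0.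
rewrite /Est_weight eqxx mulr1; have [iS|_] /= := boolP (i \in S); last first.
  by rewrite !mul0r mulr0.
transitivity (joint PS S i * #|S|%:R / incl_prob PS i); first by ring.
by rewrite joint_mul_card iS.
Qed.

Lemma expect_Est_weight (i : 'I_N) : incl_prob PS i != 0 ->
  \sum_(S : {set 'I_N}) \sum_(m < N) joint PS S m * Est_weight S m i = 1.
Proof.
move=> p_neq0; under eq_bigr => S _ do rewrite sum_joint_Est_weight.
by rewrite -mulr_suml -incl_probE divff.
Qed.

Lemma expectZ (d : nat) (a : R) (Y : {set 'I_N} -> 'I_N -> 'rV[R]_d) :
  expect PS (fun S m => a *: Y S m) = a *: expect PS Y.
Proof.
rewrite /expect scaler_sumr; apply: eq_bigr => S _; rewrite scaler_sumr.
by apply: eq_bigr => m _; rewrite !scalerA mulrC.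
Qed.

Lemma expect_sum (d : nat) (c : {set 'I_N} -> 'I_N -> 'I_N -> R)
    (v : 'I_N -> 'rV[R]_d) :
  expect PS (fun S m => \sum_(i < N) c S m i *: v i)
  = \sum_(i < N) (\sum_(S : {set 'I_N}) \sum_(m < N) joint PS S m * c S m i) *: v i.
Proof.
rewrite /expect; transitivity (\sum_(S : {set 'I_N}) \sum_(m < N) \sum_(i < N)
    (joint PS S m * c S m i) *: v i).
  apply: eq_bigr => S _; apply: eq_bigr => m _; rewrite scaler_sumr.
  by apply: eq_bigr => i _; rewrite scalerA.
under [RHS]eq_bigr => i _ do rewrite scaler_suml.
rewrite [RHS]exchange_big; apply: eq_bigr => S _ /=.
by under [RHS]eq_bigr => i _ do rewrite scaler_suml; rewrite [RHS]exchange_big.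
Qed.

Lemma expect_Est (d : nat) (gr : 'I_N -> 'rV[R]_d) :
  (forall i, incl_prob PS i != 0) ->
  expect PS (Est gr PS) = N%:R^-1 *: \sum_(i < N) gr i.
Proof.
move=> p_neq0; rewrite /Est expectZ (expect_sum _ Est_weight); congr (_ *: _).
by apply: eq_bigr => i _; rewrite expect_Est_weight // scale1r.
Qed.

End LGDUnbiased.

Theorem theorem1 (R : realType) (X : Type) (N d : nat)
  (x : 'I_N -> X) (f : X -> 'rV[R]_d -> R) (theta_t : 'rV[R]_d)
  (PS : {set 'I_N} -> R) :
  (forall i, differentiable (f (x i)) theta_t) ->
  (forall S, 0 <= PS S) ->
  \sum_(S : {set 'I_N}) PS S = 1 ->
  PS finset.set0 = 0 ->
  (forall i, 0 < incl_prob PS i) ->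
  expect PS (Est (fun i => grad (f (x i)) theta_t) PS)
  = (N%:R)^-1 *: \sum_(i < N) grad (f (x i)) theta_t.
Proof.
move=> _ _ _ _ p_gt0; apply: expect_Est => i; exact: lt0r_neq0.
Qed.
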